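(* Let $T$ be a maximally strongly consistent $\mathcal{L}$-theory in $RGL^*$ and let $\varphi,\psi$ be $\mathcal{L}$-sentences with $T\vdash\varphi\vee\psi$. Then $T\vdash\varphi$ or $T\vdash\psi$.
   Context: $\mathcal{L}$ is a first-order language with countably many predicate, function and constant symbols. Formulas of $RGL^*$ are built from atomic formulas and the nullary connectives $\bar r$ ($r\in[0,1]\cap\mathbb{Q}$, including $\bar0,\bar1$) by $\wedge,\to,\forall,\exists$; $\neg\varphi:=\varphi\to\bar1$, $\varphi\vee\psi:=((\varphi\to\psi)\to\psi)\wedge((\psi\to\varphi)\to\varphi)$, $\varphi\leftrightarrow\psi:=(\varphi\to\psi)\wedge(\psi\to\varphi)$. Proof system $\vdash$: all instances of (G1) $(\varphi\to\psi)\to((\psi\to\chi)\to(\varphi\to\chi))$; (G2) $(\varphi\wedge\psi)\to\varphi$; (G3) $(\varphi\wedge\psi)\to(\psi\wedge\varphi)$; (G4) $\varphi\to(\varphi\wedge\varphi)$; (G5) $(\varphi\to(\psi\to\chi))\leftrightarrow((\varphi\wedge\psi)\to\chi)$; (G6) $((\varphi\to\psi)\to\chi)\to(((\psi\to\varphi)\to\chi)\to\chi)$; (G7) $\bar1\to\varphi$; (G$\forall$1) $(\forall x\,\varphi(x))\to\varphi(t)$; (G$\forall$2) $\forall x(\psi\to\varphi(x))\to(\psi\to\forall x\,\varphi(x))$; (G$\forall$3) $\forall x(\psi\vee\varphi(x))\to(\psi\vee\forall x\,\varphi(x))$; (G$\exists$1) $\varphi(t)\to\exists x\,\varphi(x)$;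 (G$\exists$2) $\exists x(\psi\to\varphi(x))\to(\psi\to\exists x\,\varphi(x))$ (with $t$ substitutable for $x$ and $x$ not free in $\psi$); (RGL1) $(\bar r\wedge\bar s)\leftrightarrow\overline{\max\{r,s\}}$; (RGL2) $\bar r\to\bar s$ if $r\ge s$, $(\bar r\to\bar s)\leftrightarrow\bar s$ if $r<s$; (RGL3) $\neg\neg\bar r$ for $r<1$. Rules: modus ponens and generalization. A theory $T$ is strongly consistent if $T\nvdash\bar r$ for every rational $r\in(0,1]$; it is maximally strongly consistent if it is strongly consistent and every strongly consistent $\mathcal{L}$-theory $\Sigma\supseteq T$ equals $T$. *)

From Stdlib Require Import QArith Qcanon Vector.

Set Implicit Arguments.
Local Open Scope nat_scope.

Record signature := {
  PredSym : Type;
  FunSym : Type;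
  ConstSym : Type;
  pred_ar : PredSym -> nat;
  fun_ar : FunSym -> nat
}.

Definition countable_type (A : Type) : Prop :=
  exists f : A -> nat, forall x y, f x = f y -> x = y.

Definition countable_sig (L : signature) : Prop :=
  countable_type (PredSym L) /\ countable_type (FunSym L) /\
  countable_type (ConstSym L).

Record rat01 := Rat01 {
  rv : Qc;
  rv_ge0 : (0 <= rv)%Qc;
  rv_le1 : (rv <= 1)%Qc
}.

Lemma Qc_0_le_0 : (0 <= 0)%Qc. Proof. discriminate. Qed.
Lemma Qc_0_le_1 : (0 <= 1)%Qc. Proof. discriminate. Qed.
Lemma Qc_1_le_1 : (1 <= 1)%Qc. Proof. discriminate. Qed.

Definition r0 : rat01 := @Rat01 0%Qc Qc_0_le_0 Qc_0_le_1.
Definition r1 : rat01 := @Rat01 1%Qc Qc_0_le_1 Qc_1_le_1.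

Section Syntax.
Variable L : signature.

Inductive term : Type :=
| Var : nat -> term
| Cst : ConstSym L -> term
| App : forall f : FunSym L, Vector.t term (fun_ar L f) -> term.

Inductive form : Type :=
| Atom : forall p : PredSym L, Vector.t term (pred_ar L p) -> form
| Rc : rat01 -> form
| And : form -> form -> form
| Imp : form -> form -> form
| All : form -> form
| Ex : form -> form.

Fixpoint tsubst (s : nat -> term) (t : term) : term :=
  match t with
  | Var n => s n
  | Cst c => Cst c
  | App f v => App f (Vector.map (tsubst s) v)
  end.

Definition up (s : nat -> term) : nat -> term :=
  fun n => match n with
           | 0 => Var 0
           | S m => tsubst (fun k => Var (S k)) (s m)
           end.

Fixpoint fsubst (s : nat -> term) (A : form) : form :=
  match A with
  | Atom p v => Atom p (Vector.map (tsubst s) v)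
  | Rc r => Rc r
  | And A B => And (fsubst s A) (fsubst s B)
  | Imp A B => Imp (fsubst s A) (fsubst s B)
  | All A => All (fsubst (up s) A)
  | Ex A => Ex (fsubst (up s) A)
  end.

(* shifting all free variables: used for "x not free in psi" *)
Definition shift (A : form) : form := fsubst (fun n => Var (S n)) A.

Definition inst (t : term) (A : form) : form :=
  fsubst (fun n => match n with 0 => t | S m => Var m end) A.

Fixpoint tclosed (n : nat) (t : term) : Prop :=
  match t with
  | Var k => (k < n)%nat
  | Cst _ => True
  | App f v => Vector.fold_right (fun u acc => tclosed n u /\ acc) v True
  end.

Fixpoint fclosed (n : nat) (A : form) : Prop :=
  match A with
  | Atom p v => Vector.fold_right (fun u acc => tclosed n u /\ acc) v True
  | Rc _ => True
  | And A B => fclosed n A /\ fclosed n B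
  | Imp A B => fclosed n A /\ fclosed n B
  | All A => fclosed (S n) A
  | Ex A => fclosed (S n) A
  end.

Definition sentence (A : form) : Prop := fclosed 0 A.

Definition Neg (A : form) : form := Imp A (Rc r1).
Definition Or (A B : form) : form :=
  And (Imp (Imp A B) B) (Imp (Imp B A) A).
Definition Iff (A B : form) : form := And (Imp A B) (Imp B A).

Inductive axiom : form -> Prop :=
| G1 A B C : axiom (Imp (Imp A B) (Imp (Imp B C) (Imp A C)))
| G2 A B : axiom (Imp (And A B) A)
| G3 A B : axiom (Imp (And A B) (And B A))
| G4 A : axiom (Imp A (And A A))
| G5 A B C : axiom (Iff (Imp A (Imp B C)) (Imp (And A B) C))
| G6 A B C : axiom (Imp (Imp (Imp A B) C) (Imp (Imp (Imp B A) C) C))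
| G7 A : axiom (Imp (Rc r1) A)
| GAll1 A t : axiom (Imp (All A) (inst t A))
| GAll2 B A : axiom (Imp (All (Imp (shift B) A)) (Imp B (All A)))
| GAll3 B A : axiom (Imp (All (Or (shift B) A)) (Or B (All A)))
| GEx1 A t : axiom (Imp (inst t A) (Ex A))
| GEx2 B A : axiom (Imp (Ex (Imp (shift B) A)) (Imp B (Ex A)))
(* RGL1: (r /\ s) <-> max{r,s} *)
| RGL1a r s : (rv s <= rv r)%Qc -> axiom (Iff (And (Rc r) (Rc s)) (Rc r))
| RGL1b r s : (rv r <= rv s)%Qc -> axiom (Iff (And (Rc r) (Rc s)) (Rc s))
| RGL2a r s : (rv s <= rv r)%Qc -> axiom (Imp (Rc r) (Rc s))
| RGL2b r s : (rv r < rv s)%Qc -> axiom (Iff (Imp (Rc r) (Rc s)) (Rc s))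
| RGL3 r : (rv r < 1)%Qc -> axiom (Neg (Neg (Rc r))).

Inductive prv (T : form -> Prop) : form -> Prop :=
| prv_ax A : axiom A -> prv T A
| prv_hyp A : T A -> prv T A
| prv_mp A B : prv T A -> prv T (Imp A B) -> prv T B
| prv_gen A : prv T A -> prv T (All A).

Definition theory (T : form -> Prop) : Prop := forall A, T A -> sentence A.

Definition strongly_consistent (T : form -> Prop) : Prop :=
  forall r : rat01, (0 < rv r)%Qc -> ~ prv T (Rc r).

Definition max_strongly_consistent (T : form -> Prop) : Prop :=
  strongly_consistent T /\
  forall S : form -> Prop, theory S -> (forall A, T A -> S A) ->
    strongly_consistent S -> forall A, S A <-> T A.

End Syntax.

(** If [T] proves neither [A] nor [B], maximality makes [T + A] and [T + B]
    strongly inconsistent, so by the deduction theorem (valid because [A] and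
    [B] are sentences) [T] proves [A -> r] and [B -> s] for positive truth
    constants [r], [s].  Both then imply the weaker of the two constants, and
    prelinearity (G6) turns [A \/ B], i.e. [((A -> B) -> B) /\ ((B -> A) -> A)],
    into a proof of that constant from [T], contradicting strong consistency. *)
From Stdlib Require Import Qcanon Vector.
From Stdlib Require Import Classical.

Local Open Scope nat_scope.

Section Substitution.
Context {L : signature}.

Fixpoint tsubst_closed (t : term L) : forall n s, tclosed n t ->
  (forall k, k < n -> s k = Var L k) -> tsubst s t = t :=
  match t with
  | Var _ k => fun n s Ht Hs => Hs k Ht
  | Cst _ c => fun _ _ _ _ => eq_refl
  | App f v => fun n s Ht Hs => f_equal (App f)
      ((fix map_closed m (w : Vector.t (term L) m) :
          Vector.fold_right (fun u acc => tclosed n u /\ acc) w True ->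
          Vector.map (tsubst s) w = w :=
        match w with
        | Vector.nil _ => fun _ => eq_refl
        | Vector.cons _ u m' w' => fun Hw =>
            f_equal2 (fun a b => Vector.cons _ a m' b)
              (tsubst_closed u n s (proj1 Hw) Hs) (map_closed m' w' (proj2 Hw))
        end) _ v Ht)
  end.

Lemma map_tsubst_closed {m} (v : Vector.t (term L) m) {n s} :
  Vector.fold_right (fun u acc => tclosed n u /\ acc) v True ->
  (forall k, k < n -> s k = Var L k) -> Vector.map (tsubst s) v = v.
Proof.
  intros Hv Hs; induction v as [|u m v IH]; simpl in *; [reflexivity|].
  f_equal; [apply (tsubst_closed u n) | apply IH]; tauto.
Qed.

Lemma up_id_below {n s} : (forall k, k < n -> s k = Var L k) ->
  forall k, k < S n -> up s k = Var L k.
Proof.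
  intros Hs [|k] Hk; simpl; [reflexivity|].
  rewrite Hs by (apply PeanoNat.Nat.succ_lt_mono; exact Hk). reflexivity.
Qed.

Lemma fsubst_closed (A : form L) : forall n s, fclosed n A ->
  (forall k, k < n -> s k = Var L k) -> fsubst s A = A.
Proof.
  induction A as [p v | r | A IHA B IHB | A IHA B IHB | A IHA | A IHA];
    intros n s HA Hs; simpl in *; f_equal.
  - exact (map_tsubst_closed v HA Hs).
  - exact (IHA n s (proj1 HA) Hs).
  - exact (IHB n s (proj2 HA) Hs).
  - exact (IHA n s (proj1 HA) Hs).
  - exact (IHB n s (proj2 HA) Hs).
  - exact (IHA (S n) (up s) HA (up_id_below Hs)).
  - exact (IHA (S n) (up s) HA (up_id_below Hs)).
Qed.

Lemma shift_sentence {A : form L} : sentence A -> shift A = A.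
Proof.
  intro HA. apply (fsubst_closed A 0); [exact HA | intros k Hk; inversion Hk].
Qed.

End Substitution.

Section Derivations.
Context {L : signature} {T : form L -> Prop}.

Lemma prv_andl {A B} : prv T (And A B) -> prv T A.
Proof. intro H. exact (prv_mp H (prv_ax _ (G2 A B))). Qed.

Lemma prv_andr {A B} : prv T (And A B) -> prv T B.
Proof. intro H. exact (prv_andl (prv_mp H (prv_ax _ (G3 A B)))). Qed.

Lemma prv_imp_trans {A B C} :
  prv T (Imp A B) -> prv T (Imp B C) -> prv T (Imp A C).
Proof. intros HAB HBC. exact (prv_mp HBC (prv_mp HAB (prv_ax _ (G1 A B C)))). Qed.

Lemma prv_imp_refl A : prv T (Imp A A).
Proof. exact (prv_imp_trans (prv_ax _ (G4 A)) (prv_ax _ (G2 A A))). Qed.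

Lemma prv_imp_weaken A C : prv T C -> prv T (Imp A C).
Proof.
  intro HC. apply (prv_mp HC).
  exact (prv_mp (prv_ax _ (G2 C A)) (prv_andr (prv_ax _ (G5 C A C)))).
Qed.

Lemma prv_imp_contract {A C} : prv T (Imp A (Imp A C)) -> prv T (Imp A C).
Proof.
  intro H. apply (prv_imp_trans (prv_ax _ (G4 A))).
  exact (prv_mp H (prv_andl (prv_ax _ (G5 A A C)))).
Qed.

Lemma prv_imp_mp {A B C} :
  prv T (Imp A B) -> prv T (Imp A (Imp B C)) -> prv T (Imp A C).
Proof.
  intros HB HBC. apply prv_imp_contract.
  exact (prv_imp_trans HBC (prv_mp HB (prv_ax _ (G1 A B C)))).
Qed.

Lemma prv_or_elim {A B C} :
  prv T (Or A B) -> prv T (Imp A C) -> prv T (Imp B C) -> prv T C.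
Proof.
  intros HAB HAC HBC.
  pose proof (prv_imp_trans (prv_andr HAB) HAC) as HBA_C.
  pose proof (prv_imp_trans (prv_andl HAB) HBC) as HAB_C.
  exact (prv_mp HBA_C (prv_mp HAB_C (prv_ax _ (G6 A B C)))).
Qed.

Lemma prv_imp_Rc_weaken {A r s} : (rv s <= rv r)%Qc ->
  prv T (Imp A (Rc L r)) -> prv T (Imp A (Rc L s)).
Proof. intros Hsr H. exact (prv_imp_trans H (prv_ax _ (RGL2a L r s Hsr))). Qed.

End Derivations.

Definition extend {L} (T : form L -> Prop) (A : form L) : form L -> Prop :=
  fun X => T X \/ X = A.

Lemma deduction {L} {T : form L -> Prop} {A C : form L} :
  sentence A -> prv (extend T A) C -> prv T (Imp A C).
Proof.
  intros HA H. induction H as [C HC | C [HC | ->] | C D _ IHC _ IHCD | C _ IHC].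
  - apply prv_imp_weaken, prv_ax, HC.
  - apply prv_imp_weaken, prv_hyp, HC.
  - apply prv_imp_refl.
  - exact (prv_imp_mp IHC IHCD).
  - pose proof (GAll2 A C) as HG. rewrite (shift_sentence HA) in HG.
    exact (prv_mp (prv_gen IHC) (prv_ax _ HG)).
Qed.

Lemma not_strongly_consistent {L} {T : form L -> Prop} :
  ~ strongly_consistent T -> exists r, (0 < rv r)%Qc /\ prv T (Rc L r).
Proof.
  intro H. apply NNPP. intro Hno. apply H. intros r Hr Hp. eauto.
Qed.

Lemma theory_extend {L} {T : form L -> Prop} {A : form L} :
  theory T -> sentence A -> theory (extend T A).
Proof. intros HT HA X [HX | ->]; [exact (HT X HX) | exact HA]. Qed.

Lemma max_strongly_consistent_refutes {L} {T : form L -> Prop} {A : form L} :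
  theory T -> max_strongly_consistent T -> sentence A -> ~ prv T A ->
  exists r, (0 < rv r)%Qc /\ prv T (Imp A (Rc L r)).
Proof.
  intros HT [_ Hmax] HA HnA.
  destruct (classic (strongly_consistent (extend T A))) as [Hsc | Hsc].
  - exfalso. apply HnA, prv_hyp.
    apply (Hmax _ (theory_extend HT HA) (fun X HX => or_introl HX) Hsc).
    right; reflexivity.
  - destruct (not_strongly_consistent Hsc) as [r [Hr Hp]].
    exists r. split; [exact Hr | exact (deduction HA Hp)].
Qed.

Theorem mainTheorem9 (L : signature) (HL : countable_sig L)
  (T : form L -> Prop) (A B : form L) :
  theory T -> max_strongly_consistent T ->
  sentence A -> sentence B ->
  prv T (Or A B) -> prv T A \/ prv T B.
Proof.
  intros HT Hmsc HA HB HAB.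
  destruct (classic (prv T A)) as [HpA | HnA]; [now left|].
  destruct (classic (prv T B)) as [HpB | HnB]; [now right|].
  exfalso.
  destruct (max_strongly_consistent_refutes HT Hmsc HA HnA) as [r [Hr HAr]].
  destruct (max_strongly_consistent_refutes HT Hmsc HB HnB) as [s [Hs HBs]].
  destruct Hmsc as [Hsc _].
  destruct (Qclt_le_dec (rv r) (rv s)) as [Hrs | Hsr].
  - apply (Hsc r Hr), (prv_or_elim HAB HAr).
    exact (prv_imp_Rc_weaken (Qclt_le_weak _ _ Hrs) HBs).
  - apply (Hsc s Hs), (prv_or_elim HAB); [exact (prv_imp_Rc_weaken Hsr HAr) | exact HBs].
Qed.
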